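(* The class $\mathbb{ML}^{\Box\Diamond}$, regarded as a class of algebras $(L;\wedge,\vee,\neg,\Box,\Diamond)$, is an equational class (a variety). Concretely, such an algebra belongs to $\mathbb{ML}^{\Box\Diamond}$ if and only if it satisfies the lattice identities, the identities $x\wedge\neg x\preccurlyeq y$, $y\preccurlyeq\neg(x\wedge\neg x)$, $x\wedge\neg(x\wedge y)\preccurlyeq\neg y$, $x\vee\neg\Box x\approx 1$, $\Box 1\approx 1$, $\Box(x\vee\neg y)\wedge y\approx\Box x\wedge y$, and the identities $\neg x\vee\Diamond x\approx 1$, $\Diamond x\preccurlyeq\Diamond(x\vee y)$, $\Diamond\Box x\preccurlyeq x$, where $1$ abbreviates $\neg(x\wedge\neg x)$ and $s\preccurlyeq t$ abbreviates $s\wedge t\approx s$.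
   Context: A meet-complemented lattice is a lattice $(L,\le)$ (not necessarily distributive) such that for every $a\in L$ the element $\neg a=\max\{b\in L: a\wedge b\le c\ \text{for all } c\in L\}$ exists; such a lattice is bounded, with bottom $0$ and top $1$. For $a\in L$, $\Box a=\max\{b\in L: a\vee\neg b=1\}$ and $\Diamond a=\min\{b\in L: \neg a\vee b=1\}$, when these exist. $\mathbb{ML}^{\Box\Diamond}$ is the class of meet-complemented lattices in which both $\Box a$ and $\Diamond a$ exist for every $a$, considered as algebras with operations $\wedge,\vee,\neg,\Box,\Diamond$. *)

Section Defs.
Context {L : Type} (meet join : L -> L -> L).

Definition lattice_identities : Prop :=
  (forall x y z, meet x (meet y z) = meet (meet x y) z) /\
  (forall x y z, join x (join y z) = join (join x y) z) /\
  (forall x y, meet x y = meet y x) /\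
  (forall x y, join x y = join y x) /\
  (forall x, meet x x = x) /\
  (forall x, join x x = x) /\
  (forall x y, meet x (join x y) = x) /\
  (forall x y, join x (meet x y) = x).

Definition lle (x y : L) : Prop := meet x y = x.

Definition is_max (P : L -> Prop) (a : L) : Prop :=
  P a /\ forall b, P b -> lle b a.
Definition is_min (P : L -> Prop) (a : L) : Prop :=
  P a /\ forall b, P b -> lle a b.

Definition is_top (t : L) : Prop := forall x, lle x t.
End Defs.

(* Membership of the algebra (L; meet, join, neg, box, dia) in ML^{Box Dia}:
   (L, meet, join) is a lattice, neg a is the meet-complement of a, box a is
   max{b : a ∨ ¬b = 1} and dia a is min{b : ¬a ∨ b = 1}. *)
Definition in_MLBoxDia {L : Type} (meet join : L -> L -> L)
    (neg box dia : L -> L) : Prop :=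
  lattice_identities meet join /\
  (forall a, is_max meet (fun b => forall c, lle meet (meet a b) c) (neg a)) /\
  (forall a, is_max meet (fun b => is_top meet (join a (neg b))) (box a)) /\
  (forall a, is_min meet (fun b => is_top meet (join (neg a) b)) (dia a)).

Definition satisfies_MLBoxDia_identities {L : Type} (meet join : L -> L -> L)
    (neg box dia : L -> L) : Prop :=
  let one x := neg (meet x (neg x)) in
  lattice_identities meet join /\
  (forall x y, lle meet (meet x (neg x)) y) /\
  (forall x y, lle meet y (one x)) /\
  (forall x y, lle meet (meet x (neg (meet x y))) (neg y)) /\
  (forall x, join x (neg (box x)) = one x) /\
  (forall x, box (one x) = one x) /\
  (forall x y, meet (box (join x (neg y))) y = meet (box x) y) /\
  (forall x, join (neg x) (dia x) = one x) /\
  (forall x y, lle meet (dia x) (dia (join x y))) /\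
  (forall x, lle meet (dia (box x)) x).

(* The direction from the order-theoretic definition to the identities is
   routine reasoning with greatest and least elements.  Conversely, the
   identities pin down each operation as the required extremum: if
   [a ∧ b ≤ c] for all [c], then [b ≤ b ∧ ¬(b ∧ a) ≤ ¬a]; if [a ∨ ¬b = 1],
   then [□(a ∨ ¬b) ∧ b = □a ∧ b] together with [□1 = 1] gives [b ≤ □a];
   and if [¬a ∨ b = 1], then [a ≤ □b], so [◇a ≤ ◇(a ∨ □b) = ◇□b ≤ b]. *)


Section MeetComplementedLattices.
Context {L : Type} {meet join : L -> L -> L} {neg box dia : L -> L}.
Hypothesis HL : lattice_identities meet join.

Local Notation "x ⊑ y" := (lle meet x y) (at level 70).
Local Notation one x := (neg (meet x (neg x))).

Lemma lle_refl x : x ⊑ x.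
Proof. destruct HL as (_ & _ & _ & _ & meetI & _). apply meetI. Qed.

Lemma lle_trans x y z : x ⊑ y -> y ⊑ z -> x ⊑ z.
Proof.
  destruct HL as (meetA & _). unfold lle; intros Exy Eyz.
  rewrite <- Exy, <- meetA, Eyz. reflexivity.
Qed.

Lemma lle_anti x y : x ⊑ y -> y ⊑ x -> x = y.
Proof.
  destruct HL as (_ & _ & meetC & _). unfold lle; intros Exy Eyx.
  rewrite <- Exy, meetC. exact Eyx.
Qed.

Lemma meet_lel x y : meet x y ⊑ x.
Proof.
  destruct HL as (meetA & _ & meetC & _ & meetI & _). unfold lle.
  rewrite meetC, meetA, meetI. reflexivity.
Qed.

Lemma meet_ler x y : meet x y ⊑ y.
Proof.
  destruct HL as (meetA & _ & _ & _ & meetI & _). unfold lle.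
  rewrite <- meetA, meetI. reflexivity.
Qed.

Lemma le_meet x y z : z ⊑ x -> z ⊑ y -> z ⊑ meet x y.
Proof.
  destruct HL as (meetA & _). unfold lle; intros Ex Ey.
  rewrite meetA, Ex. exact Ey.
Qed.

Lemma lle_joinE x y : x ⊑ y <-> join x y = y.
Proof.
  destruct HL as (_ & _ & meetC & joinC & _ & _ & meet_join & join_meet).
  unfold lle; split; intro E.
  - rewrite <- E, joinC, meetC. apply join_meet.
  - rewrite <- E. apply meet_join.
Qed.

Lemma join_lel x y : x ⊑ join x y.
Proof. destruct HL as (_ & _ & _ & _ & _ & _ & meet_join & _). apply meet_join. Qed.

Lemma join_ler x y : y ⊑ join x y.
Proof.
  destruct HL as (_ & _ & _ & joinC & _ & _ & meet_join & _). unfold lle.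
  rewrite joinC. apply meet_join.
Qed.

Lemma le_join x y z : x ⊑ z -> y ⊑ z -> join x y ⊑ z.
Proof.
  intros Ex%lle_joinE Ey%lle_joinE. apply lle_joinE.
  destruct HL as (_ & joinA & _).
  rewrite <- joinA, Ey. exact Ex.
Qed.

Lemma top_unique s t : is_top meet s -> is_top meet t -> s = t.
Proof. intros Hs Ht. apply lle_anti; [apply Ht | apply Hs]. Qed.

Lemma top_le s t : is_top meet s -> s ⊑ t -> is_top meet t.
Proof. intros Hs Hst x. apply lle_trans with s; auto. Qed.

Section Identities.
Hypothesis Hneg :
  forall a, is_max meet (fun b => forall c, meet a b ⊑ c) (neg a).
Hypothesis Hbox : forall a, is_max meet (fun b => is_top meet (join a (neg b))) (box a).
Hypothesis Hdia : forall a, is_min meet (fun b => is_top meet (join (neg a) b)) (dia a).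

Lemma meet_neg_bot x y : meet x (neg x) ⊑ y.
Proof. apply (proj1 (Hneg x)). Qed.

Lemma le_neg a b : (forall c, meet a b ⊑ c) -> b ⊑ neg a.
Proof. apply (proj2 (Hneg a)). Qed.

Lemma one_top x : is_top meet (one x).
Proof.
  intros y. apply le_neg. intro c.
  apply lle_trans with (meet x (neg x)); [apply meet_lel | apply meet_neg_bot].
Qed.

Lemma neg_antitone a b : a ⊑ b -> neg b ⊑ neg a.
Proof.
  intros Hab. apply le_neg. intro c. apply lle_trans with (meet b (neg b)).
  - apply le_meet; [apply lle_trans with a; [apply meet_lel | exact Hab] | apply meet_ler].
  - apply meet_neg_bot.
Qed.

Lemma meet_neg_meet_le x y : meet x (neg (meet x y)) ⊑ neg y.
Proof.
  apply le_neg. intro c. apply lle_trans with (meet (meet x y) (neg (meet x y))).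
  - apply le_meet; [apply le_meet|].
    + apply lle_trans with (meet x (neg (meet x y))); [apply meet_ler | apply meet_lel].
    + apply meet_lel.
    + apply lle_trans with (meet x (neg (meet x y))); [apply meet_ler | apply meet_ler].
  - apply meet_neg_bot.
Qed.

Lemma join_neg_box x : join x (neg (box x)) = one x.
Proof. apply top_unique; [apply (proj1 (Hbox x)) | apply one_top]. Qed.

Lemma join_neg_dia x : join (neg x) (dia x) = one x.
Proof. apply top_unique; [apply (proj1 (Hdia x)) | apply one_top]. Qed.

Lemma box_greatest a b : is_top meet (join a (neg b)) -> b ⊑ box a.
Proof. apply (proj2 (Hbox a)). Qed.

Lemma dia_least a b : is_top meet (join (neg a) b) -> dia a ⊑ b.
Proof. apply (proj2 (Hdia a)). Qed.

Lemma box_one x : box (one x) = one x.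
Proof.
  apply lle_anti; [apply one_top|].
  apply box_greatest. apply top_le with (one x); [apply one_top | apply join_lel].
Qed.

Lemma box_join_neg_meet x y : meet (box (join x (neg y))) y = meet (box x) y.
Proof.
  set (b := box (join x (neg y))).
  apply lle_anti; apply le_meet; try apply meet_ler.
  - apply lle_trans with (meet b y); [apply lle_refl|].
    apply box_greatest. apply top_le with (join (join x (neg y)) (neg b)).
    + apply (proj1 (Hbox _)).
    + apply le_join; [apply le_join|].
      * apply join_lel.
      * apply lle_trans with (neg (meet b y)); [apply neg_antitone, meet_ler | apply join_ler].
      * apply lle_trans with (neg (meet b y)); [apply neg_antitone, meet_lel | apply join_ler].
  - apply lle_trans with (meet (box x) y); [apply lle_refl|].
    apply box_greatest. apply top_le with (join x (neg (box x))).
    + apply (proj1 (Hbox _)).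
    + apply le_join.
      * apply lle_trans with (join x (neg y)); [apply join_lel | apply join_lel].
      * apply lle_trans with (neg (meet (box x) y)); [apply neg_antitone, meet_lel | apply join_ler].
Qed.

Lemma dia_monotone x y : dia x ⊑ dia (join x y).
Proof.
  apply dia_least. apply top_le with (join (neg (join x y)) (dia (join x y))).
  - apply (proj1 (Hdia _)).
  - apply le_join; [|apply join_ler].
    apply lle_trans with (neg x); [apply neg_antitone, join_lel | apply join_lel].
Qed.

Lemma dia_box_le x : dia (box x) ⊑ x.
Proof.
  apply dia_least. apply top_le with (join x (neg (box x))).
  - apply (proj1 (Hbox _)).
  - apply le_join; [apply join_ler | apply join_lel].
Qed.

End Identities.

Section Extrema.
Hypothesis Hbot : forall x y, meet x (neg x) ⊑ y.
Hypothesis Hone : forall x y, y ⊑ one x.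
Hypothesis Hneg_meet : forall x y, meet x (neg (meet x y)) ⊑ neg y.
Hypothesis Hjoin_neg_box : forall x, join x (neg (box x)) = one x.
Hypothesis Hbox_one : forall x, box (one x) = one x.
Hypothesis Hbox_join_neg : forall x y, meet (box (join x (neg y))) y = meet (box x) y.
Hypothesis Hjoin_neg_dia : forall x, join (neg x) (dia x) = one x.
Hypothesis Hdia_monotone : forall x y, dia x ⊑ dia (join x y).
Hypothesis Hdia_box : forall x, dia (box x) ⊑ x.

Lemma neg_bot_top z : (forall c, z ⊑ c) -> is_top meet (neg z).
Proof.
  intros Hz y. replace z with (meet z (neg z)) by (symmetry; apply lle_anti; auto).
  apply Hone.
Qed.

Lemma neg_is_max a : is_max meet (fun b => forall c, meet a b ⊑ c) (neg a).
Proof.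
  split; [apply Hbot|]. intros b Hab.
  apply lle_trans with (meet b (neg (meet b a))); [|apply Hneg_meet].
  apply le_meet; [apply lle_refl|]. apply neg_bot_top.
  destruct HL as (_ & _ & meetC & _). rewrite meetC. exact Hab.
Qed.

Lemma box_greatest_of_top a b : is_top meet (join a (neg b)) -> b ⊑ box a.
Proof.
  intros Htop.
  assert (Hone_b : meet (one a) b = b).
  { apply lle_anti; [apply meet_ler | apply le_meet; [apply Hone | apply lle_refl]]. }
  pose proof (Hbox_join_neg a b) as E.
  rewrite (top_unique _ _ Htop (Hone a)), Hbox_one, Hone_b in E.
  rewrite E. apply meet_lel.
Qed.

Lemma box_is_max a : is_max meet (fun b => is_top meet (join a (neg b))) (box a).
Proof.
  split; [rewrite Hjoin_neg_box; exact (Hone a) | apply box_greatest_of_top].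
Qed.

Lemma dia_is_min a : is_min meet (fun b => is_top meet (join (neg a) b)) (dia a).
Proof.
  split; [rewrite Hjoin_neg_dia; exact (Hone a)|]. intros b Hb.
  assert (Ha : a ⊑ box b).
  { apply box_greatest_of_top.
    destruct HL as (_ & _ & _ & joinC & _). rewrite joinC. exact Hb. }
  apply lle_trans with (dia (box b)); [|apply Hdia_box].
  apply lle_joinE in Ha. rewrite <- Ha. apply Hdia_monotone.
Qed.

End Extrema.
End MeetComplementedLattices.

Theorem mainTheorem2 (L : Type) (meet join : L -> L -> L) (neg box dia : L -> L) :
  in_MLBoxDia meet join neg box dia <->
  satisfies_MLBoxDia_identities meet join neg box dia.
Proof.
  split.
  - intros (HL & Hneg & Hbox & Hdia).
    split; [exact HL|].
    repeat split; intros.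
    + apply (meet_neg_bot Hneg).
    + apply (one_top HL Hneg).
    + apply (meet_neg_meet_le HL Hneg).
    + apply (join_neg_box HL Hneg Hbox).
    + apply (box_one HL Hneg Hbox).
    + apply (box_join_neg_meet HL Hneg Hbox).
    + apply (join_neg_dia HL Hneg Hdia).
    + apply (dia_monotone HL Hneg Hdia).
    + apply (dia_box_le HL Hbox Hdia).
  - intros (HL & Hbot & Hone & Hneg_meet & Hjoin_box & Hbox_one & Hbox_join
            & Hjoin_dia & Hdia_mono & Hdia_box).
    split; [exact HL|]. split; [|split].
    + apply (neg_is_max HL Hbot Hone Hneg_meet).
    + apply (box_is_max HL Hone Hjoin_box Hbox_one Hbox_join).
    + apply (dia_is_min HL Hone Hbox_one Hbox_join Hjoin_dia Hdia_mono Hdia_box).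
Qed.
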